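(* Every finite lattice $S$ is isomorphic to the skeleton $S(D)$ of some finite distributive lattice $D$.
   Context: For a modular lattice $M$ of finite length, an interval $[a,b]$ is \emph{atomistic} if every element of it is a join of atoms of $[a,b]$ (elements covering $a$); the \emph{skeleton} $S(M)$ is the set of least elements of the maximal (under inclusion) atomistic intervals of $M$, ordered as in $M$ (it is a lattice). *)

From HB Require Import structures.
From mathcomp Require Import all_boot all_order.
Set Implicit Arguments. Unset Strict Implicit. Unset Printing Implicit Defensive.
Import Order.TTheory.
Local Open Scope order_scope.

Section Skeleton.
Variables (disp : Order.disp_t) (L : finTBLatticeType disp).

Definition covers (a y : L) : bool :=
  (a < y) && [forall z : L, ~~ ((a < z) && (z < y))].

Definition atomI (a b y : L) : bool := covers a y && (y <= b).

(* [a,b] is atomistic: every element of it is a join (computed in [a,b],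
   i.e. with a as the empty join) of atoms of [a,b] *)
Definition atomistic (a b : L) : Prop :=
  a <= b /\
  forall x : L, a <= x -> x <= b ->
    exists A : {set L}, (forall y, y \in A -> atomI a b y) /\
                        x = a `|` \join_(y in A) y.

Definition max_atomistic (a b : L) : Prop :=
  atomistic a b /\
  forall c e : L, atomistic c e -> c <= a -> b <= e -> c = a /\ e = b.

Definition skeleton (a : L) : Prop :=
  exists b : L, max_atomistic a b.

End Skeleton.

From HB Require Import structures.
From mathcomp Require Import all_boot all_order.
Import Order.TTheory.
Local Open Scope order_scope.

Set Implicit Arguments.
Unset Strict Implicit.
Unset Printing Implicit Defensive.

(* Let P be the poset on two disjoint copies of S in which [inl z]
   lies below [inr b] exactly when [b <= z] fails, and let D be the
   distributive lattice of down-sets of P.  Since P has height one, an interval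
   [I, J] of D is atomistic iff every point of J \ I is minimal outside I,
   i.e. J is contained in the set [addable I] of points all of whose
   predecessors lie in I.  Hence I is in the skeleton iff no smaller down-set
   has at least the same [addable] set.  The map x |-> {inl z | ~ x <= z} is an
   order embedding of S into D preserving finite joins, [inr b] is addable over
   I iff the image of b lies below I, and from these two facts one reads off
   that the skeleton is exactly the image of S. *)

Section Downsets.
Variables (T : finType) (r : rel T).

(* [r q p] means that q lies below p. *)
Definition down_closed (A : {set T}) : bool :=
  [forall p in A, forall q, r q p ==> (q \in A)].

Lemma down_closedP (A : {set T}) :
  reflect (forall p q, p \in A -> r q p -> q \in A) (down_closed A).
Proof.
apply: (iffP forall_inP) => [H p q /H /forallP /(_ q) /implyP // | H p pA].
by apply/forallP => q; apply/implyP; apply: H.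
Qed.

Record downset := Downset { dval :> {set T}; dvalP : down_closed dval }.
HB.instance Definition _ := [isSub for dval].
HB.instance Definition _ := [Finite of downset by <:].

Lemma down_closedI (I J : downset) : down_closed (I :&: J).
Proof.
apply/down_closedP => p q; rewrite !inE => /andP[pI pJ] rqp.
by rewrite (down_closedP _ (dvalP I) p q pI rqp) (down_closedP _ (dvalP J) p q pJ rqp).
Qed.

Lemma down_closedU (I J : downset) : down_closed (I :|: J).
Proof.
apply/down_closedP => p q; rewrite !inE => /orP[pI | pJ] rqp.
  by rewrite (down_closedP _ (dvalP I) p q pI rqp).
by rewrite (down_closedP _ (dvalP J) p q pJ rqp) orbT.
Qed.

Lemma down_closed0 : down_closed set0.
Proof. by apply/down_closedP => p q; rewrite inE. Qed.

Lemma down_closedT : down_closed setT.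
Proof. by apply/down_closedP => p q; rewrite !inE. Qed.

Definition downset_meet (I J : downset) := Downset (down_closedI I J).
Definition downset_join (I J : downset) := Downset (down_closedU I J).
Definition downset_le (I J : downset) := val I \subset val J.
Definition downset_lt (I J : downset) := (J != I) && downset_le I J.

Fact downset_le_def I J : downset_le I J = (downset_meet I J == I).
Proof. by rewrite /downset_le -val_eqE /=; apply/setIidPl/eqP. Qed.
Fact downset_lt_def I J : downset_lt I J = (J != I) && downset_le I J.
Proof. by []. Qed.
Fact downset_meetC : commutative downset_meet.
Proof. by move=> I J; apply: val_inj; rewrite /= setIC. Qed.
Fact downset_joinC : commutative downset_join.
Proof. by move=> I J; apply: val_inj; rewrite /= setUC. Qed.
Fact downset_meetA : associative downset_meet.
Proof. by move=> I J K; apply: val_inj; rewrite /= setIA. Qed.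
Fact downset_joinA : associative downset_join.
Proof. by move=> I J K; apply: val_inj; rewrite /= setUA. Qed.
Fact downset_joinKI J I : downset_meet I (downset_join I J) = I.
Proof. by apply: val_inj; rewrite /= setIC setUK. Qed.
Fact downset_meetKU J I : downset_join I (downset_meet I J) = I.
Proof. by apply: val_inj; rewrite /= setUC setIK. Qed.
Fact downset_meetUl : left_distributive downset_meet downset_join.
Proof. by move=> I J K; apply: val_inj; rewrite /= setIUl. Qed.
Fact downset_meetxx : idempotent_op downset_meet.
Proof. by move=> I; apply: val_inj; rewrite /= setIid. Qed.

HB.instance Definition _ :=
  Order.isMeetJoinDistrLattice.Build (Order.Disp tt tt) downset
    downset_le_def downset_lt_def downset_meetC downset_joinC
    downset_meetA downset_joinA downset_joinKI downset_meetKU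
    downset_meetUl downset_meetxx.

Fact downset_le0x (I : downset) : Downset down_closed0 <= I.
Proof. exact: sub0set. Qed.
Fact downset_lex1 (I : downset) : I <= Downset down_closedT.
Proof. exact: subsetT. Qed.

HB.instance Definition _ :=
  Order.hasBottom.Build (Order.Disp tt tt) downset downset_le0x.
HB.instance Definition _ :=
  Order.hasTop.Build (Order.Disp tt tt) downset downset_lex1.

Lemma le_downsetE (I J : downset) : (I <= J) = (val I \subset val J).
Proof. by []. Qed.

Lemma val_downset_join (I J : downset) : val (I `|` J) = val I :|: val J.
Proof. by []. Qed.

Lemma val_downset_joins (A : {set downset}) :
  val (\join_(I in A) I) = \bigcup_(I in A) val I.
Proof. exact: (big_morph (fun I : downset => val I)). Qed.

Definition addable (I : downset) : {set T} :=
  [set p | [forall q, r q p ==> (q \in val I)]].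

Lemma addableP (I : downset) p :
  reflect (forall q, r q p -> q \in val I) (p \in addable I).
Proof.
rewrite inE; apply: (iffP forallP) => [H q | H q]; first exact/implyP.
by apply/implyP; apply: H.
Qed.

Lemma sub_addable (I : downset) : val I \subset addable I.
Proof.
apply/subsetP => p pI; apply/addableP => q.
exact: (down_closedP _ (dvalP I) p q pI).
Qed.

Lemma down_closed_addable (I : downset) : down_closed (addable I).
Proof.
apply/down_closedP => p q /addableP pA /pA qI.
exact: (subsetP (sub_addable I)).
Qed.

Lemma down_closedU1 (I : downset) p : p \in addable I -> down_closed (p |: val I).
Proof.
move=> /addableP pA; apply/down_closedP => p' q; rewrite !inE.
case/orP=> [/eqP -> /pA -> | p'I rqp']; first by rewrite orbT.
by rewrite (down_closedP _ (dvalP I) p' q p'I rqp') orbT.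
Qed.

Lemma covers_setU1 (I : downset) p (pA : p \in addable I) :
  p \notin val I -> covers I (Downset (down_closedU1 pA)).
Proof.
move=> pI; apply/andP; split.
  rewrite lt_neqAle le_downsetE subsetU1 andbT.
  apply/eqP => /(congr1 val) /= e; apply: (negP pI).
  by change (p \in dval I); rewrite e setU11.
apply/forallP => K; apply/negP; rewrite !lt_neqAle !le_downsetE /=.
move=> /andP[/andP[KI IK] /andP[yK Ky]].
have [pK | pK] := boolP (p \in val K).
  by move/eqP: yK; apply; apply/val_inj/eqP; rewrite eqEsubset Ky subUset sub1set pK IK.
move/eqP: KI; apply; apply/val_inj/eqP; rewrite eqEsubset IK /=.
apply/subsetP => q qK; move: (subsetP Ky q qK); rewrite !inE.
by case/orP=> // /eqP qp; rewrite -qp qK in pK.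
Qed.

Lemma atomistic_addable (I J : downset) :
  I <= J -> val J \subset addable I -> atomistic I J.
Proof.
move=> IJ JA; split=> // x Ix xJ.
exists [set y | atomI I J y && (y <= x)]; split=> [y | ].
  by rewrite inE => /andP[].
apply: le_anti; apply/andP; split; last first.
  by rewrite leUx Ix; apply/joinsP => y; rewrite inE => /andP[].
rewrite le_downsetE val_downset_join val_downset_joins.
apply/subsetP => p px; rewrite inE; have [// | pI] := boolP (p \in val I).
have pA : p \in addable I by apply: (subsetP JA); apply: (subsetP xJ).
have Ipx : p |: val I \subset val x by rewrite subUset sub1set px -le_downsetE.
apply/bigcupP; exists (Downset (down_closedU1 pA)); last exact: setU11.
rewrite inE /atomI covers_setU1 //= !le_downsetE Ipx andbT.
exact: subset_trans Ipx xJ.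
Qed.

Section HeightOne.
Hypothesis r_height1 : forall p q s, r q p -> ~~ r s q.

Lemma covers_sub_addable (I y : downset) : covers I y -> val y \subset addable I.
Proof.
move=> /andP[Iy /forallP noK]; apply/subsetP => p py; apply/addableP => q rqp.
apply/contraT => qI.
(* q has no predecessors, so q |: I is a down-set strictly between I and y:
   it misses p. *)
have qA : q \in addable I by apply/addableP => s rsq; have := r_height1 s rqp; rewrite rsq.
have qy : q \in val y := down_closedP _ (dvalP y) p q py rqp.
case/negP: (noK (Downset (down_closedU1 qA))); apply/andP; split.
  by case/andP: (covers_setU1 qA qI).
rewrite lt_neqAle; apply/andP; split; last first.
  by rewrite le_downsetE /= subUset sub1set qy -le_downsetE ltW.
apply/eqP => /(congr1 val) /= yE; have : p \in dval y := py.
rewrite -yE in_setU1.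
case/orP=> [/eqP pq | pI]; first by subst p; move: (r_height1 q rqp); rewrite rqp.
by rewrite (down_closedP _ (dvalP I) p q pI rqp) in qI.
Qed.

Lemma atomisticP (I J : downset) :
  atomistic I J <-> I <= J /\ val J \subset addable I.
Proof.
split=> [[IJ H] | [IJ JA]]; last exact: atomistic_addable.
split=> //; have [A [AI ->]] := H J IJ (lexx J).
rewrite val_downset_join val_downset_joins subUset sub_addable.
by apply/bigcupsP => y /AI /andP[/covers_sub_addable].
Qed.

Lemma skeleton_downsetP (I : downset) :
  skeleton I <-> forall C, C <= I -> addable I \subset addable C -> C = I.
Proof.
split=> [[J [/atomisticP[IJ JA] maxJ]] C CI AIC | minI].
  have CJ : atomistic C J.
    by apply/atomisticP; split; [exact: le_trans IJ | exact: subset_trans AIC].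
  by case: (maxJ C J CJ CI (lexx J)).
exists (Downset (down_closed_addable I)); split.
  by apply/atomisticP; split; [exact: sub_addable | exact: subxx].
move=> C E /atomisticP[CE EA] CI AE.
have CeI : C = I by apply: minI => //; exact: subset_trans AE EA.
by split=> //; apply: le_anti; rewrite AE andbT le_downsetE -CeI.
Qed.

End HeightOne.
End Downsets.

Section Representation.
Variables (d : Order.disp_t) (S : finTBLatticeType d).

Definition nle_rel : rel (S + S) :=
  fun p q => if (p, q) is (inl z, inr b) then ~~ (b <= z) else false.

Lemma nle_rel_height1 p q s : nle_rel q p -> ~~ nle_rel s q.
Proof. by case: p; case: q; case: s. Qed.

Definition nle_set (x : S) : {set S + S} :=
  [set p | if p is inl z then ~~ (x <= z) else false].

Lemma down_closed_nle_set x : down_closed nle_rel (nle_set x).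
Proof. by apply/down_closedP => -[z | b] [y | c]; rewrite inE. Qed.

Definition embed (x : S) : downset nle_rel := Downset (down_closed_nle_set x).

Lemma le_embed x y : (embed x <= embed y) = (x <= y).
Proof.
apply/idP/idP => [| xy]; rewrite le_downsetE.
  move/subsetP/(_ (inl y)); rewrite !inE lexx.
  by case: (x <= y) => //; apply.
apply/subsetP => -[z | b]; rewrite !inE //.
by apply: contra; exact: le_trans.
Qed.

Lemma embed_inj : injective embed.
Proof. by move=> x y exy; apply/le_anti; rewrite -(le_embed x) -(le_embed y) exy lexx. Qed.

Lemma embed_join x y : embed (x `|` y) = embed x `|` embed y.
Proof. by apply: val_inj; apply/setP => -[z | b]; rewrite !inE // leUx negb_and. Qed.

Lemma embed_bot : embed \bot = \bot.
Proof. by apply: val_inj; apply/setP => -[z | b]; rewrite !inE // le0x. Qed.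

Lemma inl_addable (I : downset nle_rel) z : inl z \in addable I.
Proof. by apply/addableP => -[y | c]. Qed.

Lemma inr_addable (I : downset nle_rel) b : (inr b \in addable I) = (embed b <= I).
Proof.
rewrite le_downsetE; apply/addableP/subsetP => [H [z | c] | H [z | c] //].
- by rewrite inE => /(H (inl z)).
- by rewrite inE.
- by move=> bz; apply: H; rewrite inE.
Qed.

Lemma skeleton_embed x : skeleton (embed x).
Proof.
apply/(skeleton_downsetP nle_rel_height1) => C Cx /subsetP AC.
apply: le_anti; rewrite Cx -inr_addable.
by apply: AC; rewrite inr_addable.
Qed.

Lemma skeleton_embedded (I : downset nle_rel) : skeleton I -> exists x, embed x = I.
Proof.
move/(skeleton_downsetP nle_rel_height1) => minI.
pose x := \join_(b | embed b <= I) b.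
have xI : embed x <= I.
  rewrite /x (big_morph embed embed_join embed_bot).
  by apply/joinsP.
exists x; apply: minI => //; apply/subsetP => -[z | b] bA.
  exact: inl_addable.
rewrite inr_addable in bA; rewrite inr_addable le_embed.
exact: (@joins_sup _ _ _ b (fun c => embed c <= I) id bA).
Qed.

End Representation.

Unset Implicit Arguments.
Set Strict Implicit.

Theorem theorem7p2 (d : Order.disp_t) (S : finTBLatticeType d) :
  exists (d' : Order.disp_t) (D : finTBDistrLatticeType d') (f : S -> D),
    injective f /\
    (forall x y : S, (f x <= f y) = (x <= y)) /\
    (forall z : D, skeleton z <-> exists x : S, f x = z).
Proof.
exists (Order.Disp tt tt), (downset (@nle_rel _ S)), (@embed _ S).
split; last split.
- exact: embed_inj.
- exact: le_embed.
- move=> I; split; first exact: skeleton_embedded.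
  by case=> x <-; exact: skeleton_embed.
Qed.
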